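(* In the left-censored disclosure game described in the context, reparametrize by $\gamma=p/q>1$ and $\kappa=1/(1-p-q)>1$ (so that $(\gamma,\kappa)$ determines $(p,q)$), and consider, for fixed $e\in E$ and $\pi_0$, $$V(e)=\frac{1}{1+\frac{1-\pi_0}{\pi_0}\frac{p-\alpha}{q-\alpha}\left(\frac{q}{p}\right)^{N(e)+1}},\quad \alpha=\frac{1-\sqrt{1-4pq}}{2},\quad N(e)=\max_{0\le k\le L(e)}D(e|_k),$$ the sender's equilibrium value. Then: (1) $V(e)$ is decreasing in $\kappa$ (holding $\gamma$ fixed), for all $e\in E$. (2) If $N(e)=0$, $V(e)$ is decreasing in $\gamma$ (holding $\kappa$ fixed). If $N(e)>0$, there exists $\hat\gamma>1$ such that $V(e)$ is increasing in $\gamma$ when $\gamma>\hat\gamma$ (holding $\kappa$ fixed, for any $\kappa>1$), and the threshold $\hat\gamma\to1$ as $N(e)\to\infty$. (3) Fixing $e\in E$ and $q\in(0,\tfrac12)$, there exists $\hat p\in[q,1-q)$ such that, as a function of $p\in(q,1-q)$, $V(e)$ is increasing in $p$ for $p<\hat p$ and decreasing in $p$ for $p>\hat p$; moreover $\hat p$ is non-decreasing in $N(e)$.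
   Context: Left-censored disclosure game. A state $\omega\in\{G,B\}$ has prior probability $\pi_0\in(0,1)$ on $G$. The evidence space $E=\bigcup_{t\ge0}\{g,b\}^t$ is the set of finite sequences of signals in $\{g,b\}$, including the empty sequence $\emptyset$. For $e\in E$: $L(e)$ is its length, $G(e)$ and $B(e)$ the numbers of $g$'s and $b$'s, $D(e)=G(e)-B(e)$; for $e=(s_1,\dots,s_L)$ and $0<k\le L$, $e|_k=(s_{L-k+1},\dots,s_L)$, and $e|_0=\emptyset$. Parameters satisfy $1>p>q>0$ and $p+q<1$; evidence is drawn from $F_\omega$ with $F_G(e)=(1-p-q)p^{G(e)}q^{B(e)}$, $F_B(e)=(1-p-q)p^{B(e)}q^{G(e)}$. The disclosure rule allows a sender with evidence $e$ to send any message $e|_k$, $0\le k\le L(e)$. The receiver's optimal action equals his posterior belief on $G$, and the sender's payoff is the receiver's action. In this game the sender's value function (her payoff in any truth-leaning equilibrium) is given by the displayed formula for $V(e)$; $\gamma$ measures signal informativeness and $\kappa$ is the expected length of evidence. *)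

From Stdlib Require Import Reals Lra Lia ZArith List.
Open Scope R_scope.

(* Evidence: finite sequences of signals; true = g, false = b. *)
Definition evidence := list bool.

Definition Gcnt (e : evidence) : nat := length (filter (fun s : bool => s) e).
Definition Bcnt (e : evidence) : nat := length (filter (fun s : bool => negb s) e).

Definition Dz (e : evidence) : Z := (Z.of_nat (Gcnt e) - Z.of_nat (Bcnt e))%Z.

Definition suffix (e : evidence) (k : nat) : evidence := skipn (length e - k) e.

(* N(e) = max_{0 <= k <= L(e)} D(e|_k)  (the k = 0 term gives 0, so N(e) >= 0) *)
Definition Ncap (e : evidence) : Z :=
  fold_right Z.max (Dz (suffix e 0))
    (map (fun k => Dz (suffix e k)) (seq 0 (S (length e)))).

Definition alpha (p q : R) : R := (1 - sqrt (1 - 4 * p * q)) / 2.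

Definition V (pi0 p q : R) (e : evidence) : R :=
  / (1 + (1 - pi0) / pi0 * ((p - alpha p q) / (q - alpha p q))
          * powerRZ (q / p) (Ncap e + 1)).

(* Reparametrization gamma = p/q, kappa = 1/(1-p-q) *)
Definition p_of (gamma kappa : R) : R := gamma * (1 - / kappa) / (1 + gamma).
Definition q_of (gamma kappa : R) : R := (1 - / kappa) / (1 + gamma).

Definition Vgk (pi0 gamma kappa : R) (e : evidence) : R :=
  V pi0 (p_of gamma kappa) (q_of gamma kappa) e.

From Stdlib Require Import Reals Lra Lia ZArith List.
From Coquelicot Require Import Coquelicot.
Open Scope R_scope.

(** [V = 1 / (1 + (1 - pi0) / pi0 * O)] with the odds
    [O = (beta - q) / (beta - p) * (q / p) ^ N], where [beta = 1 - alpha] is the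
    larger root of [x (1 - x) = p q]: indeed [(p - alpha) / (q - alpha) * (q / p)
    = (beta - q) / (beta - p)].  So [V] moves opposite to [O].

    (1) For fixed [gamma], [q / p = 1 / gamma] while [q] increases with [kappa];
    since [beta / q] decreases, [(beta - q) / (beta - gamma q)] increases.

    (2) For fixed [kappa], use [m = p + q = 1 - 1 / kappa] and [d = p - q], which
    increases with [gamma].  With [S = sqrt (1 - m^2 + d^2)],
    [d/dd ln O = (1 + m + S) / (S (1 + S)) - 2 N m / (m^2 - d^2)], positive for
    [N = 0] and negative as soon as [d (N + 2) > 2 m], i.e. [gamma > 1 + 4 / N].

    (3) For fixed [q], parametrize [p] by [a = alpha p q], an increasing bijection
    from [(q, 1 - q)] onto [(alpha q q, q)] with inverse [a (1 - a) / q].  The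
    derivative of [ln O] in [a] is increasing, tends to [+oo] at [q] and decreases
    with [N]; so it changes sign exactly once, at a point moving right as [N] grows,
    and [p_hat] is the corresponding value of [p]. *)

Lemma incr_of_deriv_pos (f df : R -> R) (a b : R) : a < b ->
  (forall x, a <= x <= b -> is_derive f x (df x)) ->
  (forall x, a <= x <= b -> 0 < df x) -> f a < f b.
Proof.
  intros Hab Hf Hdf.
  apply (incr_function_le f a b df); simpl; try lra;
    intros x Hax Hxb; [apply Hf | apply Hdf]; simpl in *; lra.
Qed.

Lemma decr_of_deriv_neg (f df : R -> R) (a b : R) : a < b ->
  (forall x, a <= x <= b -> is_derive f x (df x)) ->
  (forall x, a <= x <= b -> df x < 0) -> f b < f a.
Proof.
  intros Hab Hf Hdf.
  enough (- f a < - f b) by lra.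
  apply (incr_of_deriv_pos (fun x => - f x) (fun x => - df x)); try lra.
  - intros x Hx. exact (is_derive_opp f x (df x) (Hf x Hx)).
  - intros x Hx. specialize (Hdf x Hx). lra.
Qed.

Lemma inv_1_plus_lt (c x y : R) :
  0 < c -> 0 < x -> x < y -> / (1 + c * y) < / (1 + c * x).
Proof.
  intros Hc Hx Hxy.
  apply Rinv_lt_contravar; [apply Rmult_lt_0_compat|]; nra.
Qed.

Lemma div_lt_div_cross (a b c d : R) : 0 < b -> 0 < d -> a * d < c * b -> a / b < c / d.
Proof.
  intros Hb Hd H. apply Rmult_lt_reg_r with (b * d); [nra|].
  replace (a / b * (b * d)) with (a * d) by (field; lra).
  replace (c / d * (b * d)) with (c * b) by (field; lra).
  exact H.
Qed.

Section Crossing.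

Variables (l r : R) (g : R -> R).

Definition neg_region (x : R) : Prop := x = l \/ (l < x < r /\ g x < 0).

Lemma neg_region_bound : bound neg_region.
Proof.
  exists (Rmax l r). intros x [-> | [[_ Hxr] _]].
  - apply Rmax_l.
  - apply Rlt_le, Rlt_le_trans with r; [exact Hxr | apply Rmax_r].
Qed.

Lemma neg_region_inhabited : exists x, neg_region x.
Proof. exists l. now left. Qed.

Definition crossing : R :=
  proj1_sig (completeness neg_region neg_region_bound neg_region_inhabited).

Lemma crossing_lub : is_lub neg_region crossing.
Proof. exact (proj2_sig (completeness _ _ _)). Qed.

Hypothesis g_incr : forall x y, l < x -> x < y -> y < r -> g x < g y.
Hypothesis g_pos : exists x, l < x < r /\ 0 < g x.

Lemma crossing_spec :
  l <= crossing < r /\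
  (forall x, l < x < crossing -> g x < 0) /\
  (forall x, crossing < x < r -> 0 < g x).
Proof.
  destruct crossing_lub as [Hub Hlub].
  destruct g_pos as (x1 & Hx1 & Hgx1).
  assert (Hle : forall x, l < x < r -> 0 <= g x -> crossing <= x).
  { intros x Hx Hgx. apply Hlub. intros y [-> | [Hy Hgy]]; [lra|].
    destruct (Rlt_or_le x y) as [Hxy | Hyx]; [|exact Hyx].
    specialize (g_incr x y ltac:(lra) Hxy ltac:(lra)). lra. }
  assert (Hl : l <= crossing) by (apply Hub; now left).
  assert (Hr : crossing < r) by (apply Rle_lt_trans with x1; [apply Hle|]; lra).
  split; [lra | split].
  - intros x Hx. destruct (Rlt_or_le (g x) 0) as [Hneg | Hnneg]; [exact Hneg|].
    assert (crossing <= x) by (apply Hle; lra). lra.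
  - intros x Hx. set (z := (crossing + x) / 2).
    assert (Hgz : 0 <= g z).
    { destruct (Rlt_or_le (g z) 0) as [Hneg | Hnneg]; [exfalso|exact Hnneg].
      assert (z <= crossing) by (apply Hub; right; unfold z; split; [lra | exact Hneg]).
      unfold z in *; lra. }
    specialize (g_incr z x ltac:(unfold z; lra) ltac:(unfold z; lra) ltac:(lra)). lra.
Qed.

End Crossing.

Lemma crossing_le (l r : R) (g1 g2 : R -> R) :
  (forall x, l < x < r -> g2 x <= g1 x) -> crossing l r g1 <= crossing l r g2.
Proof.
  intros Hg. destruct (crossing_lub l r g1) as [_ Hlub].
  destruct (crossing_lub l r g2) as [Hub _].
  apply Hlub. intros x [-> | [Hx Hgx]]; apply Hub; [now left|].
  right. split; [exact Hx|]. specialize (Hg x Hx). lra.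
Qed.

Lemma Ncap_nonneg (e : evidence) : (0 <= Ncap e)%Z.
Proof.
  unfold Ncap.
  replace (Dz (suffix e 0)) with 0%Z
    by (unfold suffix; now rewrite Nat.sub_0_r, skipn_all).
  induction (map _ _) as [|x l IH]; simpl; lia.
Qed.

Definition admissible (p q : R) : Prop := 0 < p /\ 0 < q /\ p + q < 1.

Definition beta (p q : R) : R := (1 + sqrt (1 - 4 * p * q)) / 2.

Definition odds (p q : R) (n : nat) : R := (beta p q - q) / (beta p q - p) * (q / p) ^ n.

Lemma alpha_beta (p q : R) : alpha p q = 1 - beta p q.
Proof. unfold alpha, beta. field. Qed.

Lemma beta_root (p q : R) : 4 * p * q <= 1 -> beta p q * (1 - beta p q) = p * q.
Proof.
  intros Hpq. unfold beta.
  pose proof (sqrt_sqrt (1 - 4 * p * q) ltac:(lra)). nra.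
Qed.

Lemma discr_pos (p q : R) : admissible p q -> 0 < 1 - 4 * p * q.
Proof. intros (Hp & Hq & Hpq). pose proof (pow2_ge_0 (p - q)). nra. Qed.

Lemma beta_bounds (p q : R) : admissible p q ->
  1 - p < beta p q /\ 1 - q < beta p q /\ beta p q < 1.
Proof.
  intros Hadm. pose proof (discr_pos p q Hadm) as Hd.
  destruct Hadm as (Hp & Hq & Hpq). unfold beta.
  assert (Hs : sqrt (1 - 4 * p * q) * sqrt (1 - 4 * p * q) = 1 - 4 * p * q)
    by (apply sqrt_sqrt; lra).
  pose proof (sqrt_pos (1 - 4 * p * q)).
  set (s := sqrt _) in *.
  assert (0 < 4 * p * (1 - p - q)) by (apply Rmult_lt_0_compat; lra).
  assert (0 < 4 * q * (1 - p - q)) by (apply Rmult_lt_0_compat; lra).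
  assert (0 < p * q) by (apply Rmult_lt_0_compat; lra).
  repeat split; nra.
Qed.

Lemma odds_pos (p q : R) (n : nat) : admissible p q -> 0 < odds p q n.
Proof.
  intros Hadm. destruct (beta_bounds p q Hadm) as (Hbp & Hbq & _).
  destruct Hadm as (Hp & Hq & Hpq). unfold odds.
  apply Rmult_lt_0_compat; [apply Rdiv_lt_0_compat | apply pow_lt, Rdiv_lt_0_compat]; lra.
Qed.

Lemma V_odds (pi0 p q : R) (e : evidence) : admissible p q ->
  V pi0 p q e = / (1 + (1 - pi0) / pi0 * odds p q (Z.to_nat (Ncap e))).
Proof.
  intros Hadm. destruct (beta_bounds p q Hadm) as (Hbp & Hbq & _).
  assert (Hroot := beta_root p q ltac:(pose proof (discr_pos p q Hadm); lra)).
  destruct Hadm as (Hp & Hq & Hpq).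
  unfold V, odds. rewrite alpha_beta. set (b := beta p q) in *. clearbody b.
  replace (Ncap e + 1)%Z with (Z.of_nat (S (Z.to_nat (Ncap e))))
    by (pose proof (Ncap_nonneg e); lia).
  assert (Hratio : (p - (1 - b)) / (q - (1 - b)) * (q / p) = (b - q) / (b - p)).
  { assert (E : (p - (1 - b)) * q * (b - p) - (b - q) * p * (q - (1 - b))
                = (q - p) * (p * q - b * (1 - b))) by ring.
    rewrite Hroot, Rminus_diag, Rmult_0_r in E.
    field_simplify_eq; [lra | repeat split; apply Rgt_not_eq; lra]. }
  rewrite <- pow_powerRZ, <- tech_pow_Rmult, <- Hratio.
  f_equal. ring.
Qed.

Lemma V_lt_of_odds (pi0 p1 q1 p2 q2 : R) (e : evidence) :
  0 < pi0 < 1 -> admissible p1 q1 -> admissible p2 q2 ->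
  odds p1 q1 (Z.to_nat (Ncap e)) < odds p2 q2 (Z.to_nat (Ncap e)) ->
  V pi0 p2 q2 e < V pi0 p1 q1 e.
Proof.
  intros Hpi H1 H2 Hlt. rewrite !V_odds by assumption.
  apply inv_1_plus_lt; [apply Rdiv_lt_0_compat; lra | apply odds_pos |]; assumption.
Qed.

Lemma beta_lt_beta (p1 q1 p2 q2 : R) :
  0 <= p1 * q1 -> p1 * q1 < p2 * q2 -> 4 * p2 * q2 <= 1 -> beta p2 q2 < beta p1 q1.
Proof.
  intros H0 H12 H2. unfold beta.
  enough (sqrt (1 - 4 * p2 * q2) < sqrt (1 - 4 * p1 * q1)) by lra.
  apply sqrt_lt_1_alt. lra.
Qed.

Lemma odds_fixed_ratio_lt (g q1 q2 : R) (n : nat) : 1 < g -> 0 < q1 -> q1 < q2 ->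
  (1 + g) * q2 < 1 -> odds (g * q1) q1 n < odds (g * q2) q2 n.
Proof.
  intros Hg Hq1 Hq12 Hq2.
  assert (Hadm1 : admissible (g * q1) q1) by (repeat split; nra).
  assert (Hadm2 : admissible (g * q2) q2) by (repeat split; nra).
  destruct (beta_bounds _ _ Hadm1) as (Hb1 & Hb1' & _).
  destruct (beta_bounds _ _ Hadm2) as (Hb2 & Hb2' & _).
  destruct Hadm1 as (_ & _ & Hm1), Hadm2 as (_ & _ & Hm2).
  assert (Hb12 : beta (g * q2) q2 < beta (g * q1) q1).
  { assert (q1 * q1 < q2 * q2) by nra.
    pose proof (pow2_ge_0 (g * q2 - q2)).
    apply beta_lt_beta; nra. }
  unfold odds. set (b1 := beta (g * q1) q1) in *. set (b2 := beta (g * q2) q2) in *.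
  replace (q1 / (g * q1)) with (/ g) by (field; lra).
  replace (q2 / (g * q2)) with (/ g) by (field; lra).
  apply Rmult_lt_compat_r; [apply pow_lt, Rinv_0_lt_compat; lra|].
  apply div_lt_div_cross; [lra | lra |].
  assert (b2 * q1 < b1 * q2) by nra.
  nra.
Qed.

Lemma mass_bounds (kappa : R) : 1 < kappa -> 0 < 1 - / kappa < 1.
Proof.
  intros Hk. assert (0 < / kappa < 1); [|lra].
  split; [apply Rinv_0_lt_compat; lra|].
  rewrite <- Rinv_1. apply Rinv_lt_contravar; lra.
Qed.

Lemma Vgk_decr_kappa (pi0 gamma k1 k2 : R) (e : evidence) :
  0 < pi0 < 1 -> 1 < gamma -> 1 < k1 -> k1 < k2 ->
  Vgk pi0 gamma k2 e < Vgk pi0 gamma k1 e.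
Proof.
  intros Hpi Hg Hk1 Hk12.
  pose proof (mass_bounds k1 Hk1). pose proof (mass_bounds k2 ltac:(lra)).
  assert (Hk : / k2 < / k1) by (apply Rinv_lt_contravar; nra).
  assert (Hp : forall k, p_of gamma k = gamma * q_of gamma k)
    by (intros; unfold p_of, q_of, Rdiv; ring).
  assert (Hq : forall k, 1 < k -> (1 + gamma) * q_of gamma k = 1 - / k)
    by (intros; unfold q_of; field; split; apply Rgt_not_eq; lra).
  pose proof (Hq k1 Hk1). pose proof (Hq k2 ltac:(lra)).
  unfold Vgk. rewrite !Hp.
  apply V_lt_of_odds; [exact Hpi | repeat split; nra .. |].
  apply odds_fixed_ratio_lt; nra.
Qed.

Definition disc_md (m d : R) : R := sqrt (1 - m ^ 2 + d ^ 2).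

Definition log_odds_md (m : R) (n : nat) (d : R) : R :=
  ln (1 + disc_md m d - m + d) - ln (1 + disc_md m d - m - d)
  + INR n * (ln (m - d) - ln (m + d)).

Definition dlog_odds_md (m : R) (n : nat) (d : R) : R :=
  (1 + m + disc_md m d) / (disc_md m d * (1 + disc_md m d))
  - 2 * INR n * m / ((m - d) * (m + d)).

Lemma disc_md_bounds (m d : R) : 0 < m < 1 -> 0 <= d < m ->
  disc_md m d * disc_md m d = 1 - m ^ 2 + d ^ 2 /\ d < disc_md m d.
Proof.
  intros Hm Hd. unfold disc_md.
  assert (Hsq : sqrt (1 - m ^ 2 + d ^ 2) * sqrt (1 - m ^ 2 + d ^ 2) = 1 - m ^ 2 + d ^ 2)
    by (apply sqrt_sqrt; nra).
  pose proof (sqrt_pos (1 - m ^ 2 + d ^ 2)).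
  repeat split; nra.
Qed.

Lemma is_derive_log_odds_md (m : R) (n : nat) (d : R) : 0 < m < 1 -> 0 < d < m ->
  is_derive (log_odds_md m n) d (dlog_odds_md m n d).
Proof.
  intros Hm Hd. destruct (disc_md_bounds m d) as (Hsq & HdS); try lra.
  unfold log_odds_md, dlog_odds_md, disc_md in *. auto_derive.
  all: replace (1 - m * (m * 1) + d * (d * 1)) with (1 - m ^ 2 + d ^ 2) by ring.
  all: set (S := sqrt (1 - m ^ 2 + d ^ 2)) in *; clearbody S.
  - repeat split; nra.
  - set (A := 1 + S - m + d). set (B := 1 + S - m - d).
    assert (HA : 0 < A) by (unfold A; lra). assert (HB : 0 < B) by (unfold B; lra).
    assert (Hprod : A * B = 2 * (1 - m) * (1 + S)) by (unfold A, B; nra).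
    assert (Hnum : (S + d) * B + (S - d) * A = 2 * (1 - m) * (1 + m + S))
      by (unfold A, B; nra).
    transitivity (((S + d) * B + (S - d) * A) / (S * (A * B))
                  - 2 * INR n * m / ((m - d) * (m + d))).
    + unfold A, B. field. repeat split; apply Rgt_not_eq; lra.
    + rewrite Hnum, Hprod. field. repeat split; apply Rgt_not_eq; lra.
Qed.

Lemma dlog_odds_md_pos (m d : R) : 0 < m < 1 -> 0 < d < m -> 0 < dlog_odds_md m 0 d.
Proof.
  intros Hm Hd. destruct (disc_md_bounds m d) as (_ & HdS); try lra.
  unfold dlog_odds_md. rewrite Rmult_0_r, Rmult_0_l, Rdiv_0_l, Rminus_0_r.
  apply Rdiv_lt_0_compat; [|apply Rmult_lt_0_compat]; lra.
Qed.

Lemma dlog_odds_md_neg (m : R) (n : nat) (d : R) : 0 < m < 1 -> 0 < d < m ->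
  2 * m < d * (INR n + 2) -> dlog_odds_md m n d < 0.
Proof.
  intros Hm Hd Hthr. destruct (disc_md_bounds m d) as (_ & HdS); try lra.
  unfold dlog_odds_md. set (S := disc_md m d) in *. set (N := INR n) in *.
  assert (HN : 0 <= N) by apply pos_INR.
  assert (Hdisc_part : (1 + m + S) / (S * (1 + S)) < 2 / d).
  { apply div_lt_div_cross; [nra | lra | nra]. }
  assert (Hpow_part : 2 / d < 2 * N * m / ((m - d) * (m + d))).
  { apply div_lt_div_cross; [lra | nra |].
    assert (m - d < N * d / 2) by lra.
    assert ((m - d) * (m + d) < N * d / 2 * (m + d)) by nra.
    nra. }
  lra.
Qed.

Lemma admissible_md (m d : R) : 0 < m < 1 -> 0 < d < m ->
  admissible ((m + d) / 2) ((m - d) / 2).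
Proof. intros Hm Hd. repeat split; lra. Qed.

Lemma ln_odds_md (m : R) (n : nat) (d : R) : 0 < m < 1 -> 0 < d < m ->
  ln (odds ((m + d) / 2) ((m - d) / 2) n) = log_odds_md m n d.
Proof.
  intros Hm Hd. destruct (disc_md_bounds m d) as (_ & HdS); try lra.
  unfold odds, beta, log_odds_md.
  replace (1 - 4 * ((m + d) / 2) * ((m - d) / 2)) with (1 - m ^ 2 + d ^ 2) by field.
  fold (disc_md m d). set (S := disc_md m d) in *.
  replace (((1 + S) / 2 - (m - d) / 2) / ((1 + S) / 2 - (m + d) / 2))
    with ((1 + S - m + d) / (1 + S - m - d)) by (field; apply Rgt_not_eq; lra).
  replace ((m - d) / 2 / ((m + d) / 2)) with ((m - d) / (m + d))
    by (field; apply Rgt_not_eq; lra).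
  rewrite ln_mult, ln_pow, !ln_div; try lra;
    apply Rdiv_lt_0_compat || apply pow_lt, Rdiv_lt_0_compat; lra.
Qed.

Lemma odds_md_lt (m : R) (n : nat) (d1 d2 : R) : 0 < m < 1 -> 0 < d1 < m -> 0 < d2 < m ->
  log_odds_md m n d1 < log_odds_md m n d2 ->
  odds ((m + d1) / 2) ((m - d1) / 2) n < odds ((m + d2) / 2) ((m - d2) / 2) n.
Proof.
  intros Hm Hd1 Hd2 Hlt.
  apply ln_lt_inv; [apply odds_pos, admissible_md; lra .. |].
  now rewrite !ln_odds_md.
Qed.

Definition gap (gamma kappa : R) : R := (1 - / kappa) * (gamma - 1) / (gamma + 1).

Lemma Vgk_md (pi0 gamma kappa : R) (e : evidence) : 1 < gamma -> 1 < kappa ->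
  Vgk pi0 gamma kappa e
  = V pi0 ((1 - / kappa + gap gamma kappa) / 2) ((1 - / kappa - gap gamma kappa) / 2) e.
Proof.
  intros Hg Hk. unfold Vgk, p_of, q_of, gap.
  f_equal; field; split; apply Rgt_not_eq; lra.
Qed.

Lemma gap_bounds (gamma kappa : R) : 1 < gamma -> 1 < kappa ->
  0 < gap gamma kappa < 1 - / kappa.
Proof.
  intros Hg Hk. pose proof (mass_bounds kappa Hk). unfold gap. split.
  - apply Rdiv_lt_0_compat; [apply Rmult_lt_0_compat|]; lra.
  - apply Rlt_div_l; nra.
Qed.

Lemma gap_lt (g1 g2 kappa : R) : 1 < kappa -> 1 < g1 -> g1 < g2 -> gap g1 kappa < gap g2 kappa.
Proof.
  intros Hk Hg1 Hg12. pose proof (mass_bounds kappa Hk). unfold gap.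
  apply div_lt_div_cross; nra.
Qed.

Lemma gap_threshold (gamma kappa N : R) : 1 < kappa -> 0 < N -> 1 + 4 / N < gamma ->
  2 * (1 - / kappa) < gap gamma kappa * (N + 2).
Proof.
  intros Hk HN Hg. pose proof (mass_bounds kappa Hk).
  assert (Hg1 : 1 < gamma) by (pose proof (Rdiv_lt_0_compat 4 N ltac:(lra) HN); lra).
  assert (HgN : 4 < (gamma - 1) * N).
  { replace 4 with (4 / N * N) by (field; apply Rgt_not_eq; lra).
    apply Rmult_lt_compat_r; lra. }
  unfold gap.
  replace ((1 - / kappa) * (gamma - 1) / (gamma + 1) * (N + 2))
    with ((1 - / kappa) * ((gamma - 1) * (N + 2) / (gamma + 1)))
    by (field; repeat split; apply Rgt_not_eq; lra).
  rewrite Rmult_comm. apply Rmult_lt_compat_l; [lra|].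
  apply Rlt_div_r; lra.
Qed.

Lemma Vgk_decr_gamma (pi0 kappa g1 g2 : R) (e : evidence) :
  0 < pi0 < 1 -> 1 < kappa -> Ncap e = 0%Z -> 1 < g1 -> g1 < g2 ->
  Vgk pi0 g2 kappa e < Vgk pi0 g1 kappa e.
Proof.
  intros Hpi Hk HN Hg1 Hg12.
  pose proof (mass_bounds kappa Hk).
  pose proof (gap_bounds g1 kappa Hg1 Hk). pose proof (gap_bounds g2 kappa ltac:(lra) Hk).
  pose proof (gap_lt g1 g2 kappa Hk Hg1 Hg12).
  rewrite !Vgk_md by lra.
  apply V_lt_of_odds; [exact Hpi | apply admissible_md; lra .. |].
  rewrite HN. apply odds_md_lt; try lra.
  apply (incr_of_deriv_pos _ (dlog_odds_md (1 - / kappa) 0)); [lra | |];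
    intros d Hd; [apply is_derive_log_odds_md | apply dlog_odds_md_pos]; lra.
Qed.

Definition gamma_hat (N : Z) : R := 1 + 4 / IZR N.

Lemma gamma_hat_gt_1 (N : Z) : (0 < N)%Z -> 1 < gamma_hat N.
Proof.
  intros HN. apply IZR_lt in HN. unfold gamma_hat.
  pose proof (Rdiv_lt_0_compat 4 _ ltac:(lra) HN). lra.
Qed.

Lemma Vgk_incr_gamma (pi0 kappa g1 g2 : R) (e : evidence) :
  0 < pi0 < 1 -> 1 < kappa -> (0 < Ncap e)%Z ->
  gamma_hat (Ncap e) < g1 -> g1 < g2 ->
  Vgk pi0 g1 kappa e < Vgk pi0 g2 kappa e.
Proof.
  intros Hpi Hk HN Hg1 Hg12.
  assert (H1 : 1 < g1) by (pose proof (gamma_hat_gt_1 _ HN); lra).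
  unfold gamma_hat in Hg1.
  set (n := Z.to_nat (Ncap e)).
  assert (Hn : INR n = IZR (Ncap e))
    by (unfold n; rewrite INR_IZR_INZ, Z2Nat.id; [reflexivity | lia]).
  apply IZR_lt in HN. rewrite <- Hn in *.
  pose proof (mass_bounds kappa Hk).
  pose proof (gap_bounds g1 kappa H1 Hk). pose proof (gap_bounds g2 kappa ltac:(lra) Hk).
  pose proof (gap_lt g1 g2 kappa Hk H1 Hg12).
  pose proof (gap_threshold g1 kappa (INR n) Hk HN Hg1).
  rewrite !Vgk_md by lra.
  apply V_lt_of_odds; [exact Hpi | apply admissible_md; lra .. |].
  apply odds_md_lt; try lra.
  apply (decr_of_deriv_neg _ (dlog_odds_md (1 - / kappa) n)); [lra | |];
    intros d Hd; [apply is_derive_log_odds_md | apply dlog_odds_md_neg]; nra.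
Qed.

Lemma alpha_bounds (p q : R) : admissible p q ->
  0 < alpha p q < q /\ alpha p q * (1 - alpha p q) = p * q.
Proof.
  intros Hadm. rewrite alpha_beta.
  destruct (beta_bounds p q Hadm) as (_ & Hbq & Hb1).
  assert (Hroot := beta_root p q ltac:(pose proof (discr_pos p q Hadm); lra)).
  split; [lra|]. rewrite <- Hroot. ring.
Qed.

Lemma alpha_lt_alpha (p1 p2 q : R) : 0 < q -> 0 <= p1 -> p1 < p2 -> 4 * p2 * q <= 1 ->
  alpha p1 q < alpha p2 q.
Proof.
  intros Hq Hp1 Hp12 Hp2. rewrite !alpha_beta.
  enough (beta p2 q < beta p1 q) by lra.
  apply beta_lt_beta; nra.
Qed.

Lemma alpha_of_root (a q : R) : 0 < q -> 0 <= a <= 1 / 2 -> alpha (a * (1 - a) / q) q = a.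
Proof.
  intros Hq Ha. unfold alpha.
  replace (1 - 4 * (a * (1 - a) / q) * q) with ((1 - 2 * a) ^ 2)
    by (field; apply Rgt_not_eq; lra).
  rewrite sqrt_pow2 by lra. field.
Qed.

Definition log_odds_alpha (q : R) (n : nat) (a : R) : R :=
  ln (1 - a - q) - ln (q - a) - ln (1 - a) - INR n * (ln a + ln (1 - a)).

Definition dlog_odds_alpha (q : R) (n : nat) (a : R) : R :=
  (1 - 2 * q) / ((q - a) * (1 - a - q)) + (INR n + 1) / (1 - a) - INR n / a.

Lemma ln_odds_alpha (p q : R) (n : nat) : admissible p q ->
  ln (odds p q n) = log_odds_alpha q n (alpha p q) + (2 * INR n + 1) * ln q.
Proof.
  intros Hadm. destruct (alpha_bounds p q Hadm) as (Ha & Hroot).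
  destruct Hadm as (Hp & Hq & Hpq).
  unfold odds, log_odds_alpha.
  replace (beta p q) with (1 - alpha p q) by (rewrite alpha_beta; ring).
  set (a := alpha p q) in *. clearbody a.
  assert (Ha1 : a < 1 - q) by nra.
  replace p with (a * (1 - a) / q) by (rewrite Hroot; field; apply Rgt_not_eq; lra).
  replace ((1 - a - q) / (1 - a - a * (1 - a) / q))
    with ((1 - a - q) * q / ((q - a) * (1 - a)))
    by (field; repeat split; apply Rgt_not_eq; nra).
  replace (q / (a * (1 - a) / q)) with (q * q / (a * (1 - a)))
    by (field; repeat split; apply Rgt_not_eq; nra).
  rewrite ln_mult, ln_pow, !ln_div, !ln_mult; try lra;
    repeat (apply Rmult_lt_0_compat || apply Rdiv_lt_0_compat || apply pow_lt
            || apply Rinv_0_lt_compat); lra.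
Qed.

Lemma is_derive_log_odds_alpha (q : R) (n : nat) (a : R) : q < 1 / 2 -> 0 < a < q ->
  is_derive (log_odds_alpha q n) a (dlog_odds_alpha q n a).
Proof.
  intros Hq Ha. unfold log_odds_alpha, dlog_odds_alpha. auto_derive.
  - repeat split; lra.
  - field. repeat split; apply Rgt_not_eq; lra.
Qed.

Lemma dlog_odds_alpha_incr (q : R) (n : nat) (a1 a2 : R) :
  q < 1 / 2 -> 0 < a1 -> a1 < a2 -> a2 < q ->
  dlog_odds_alpha q n a1 < dlog_odds_alpha q n a2.
Proof.
  intros Hq Ha1 Ha12 Ha2. unfold dlog_odds_alpha.
  pose proof (pos_INR n).
  assert (Hpole : (1 - 2 * q) / ((q - a1) * (1 - a1 - q))
                  < (1 - 2 * q) / ((q - a2) * (1 - a2 - q))).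
  { apply div_lt_div_cross; [nra | nra |].
    apply Rmult_lt_compat_l; nra. }
  assert (Hright : (INR n + 1) / (1 - a1) <= (INR n + 1) / (1 - a2)).
  { apply Rmult_le_compat_l; [lra | apply Rinv_le_contravar; lra]. }
  assert (Hleft : INR n / a2 <= INR n / a1).
  { apply Rmult_le_compat_l; [lra | apply Rinv_le_contravar; lra]. }
  lra.
Qed.

Lemma dlog_odds_alpha_antitone (q : R) (n n' : nat) (a : R) :
  (n <= n')%nat -> 0 < a < 1 / 2 -> dlog_odds_alpha q n' a <= dlog_odds_alpha q n a.
Proof.
  intros Hn Ha. apply le_INR in Hn.
  assert (E : dlog_odds_alpha q n a - dlog_odds_alpha q n' a
              = (INR n' - INR n) * (1 / a - 1 / (1 - a)))
    by (unfold dlog_odds_alpha, Rdiv; ring).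
  assert (1 / (1 - a) <= 1 / a)
    by (apply Rmult_le_compat_l; [lra | apply Rinv_le_contravar; lra]).
  nra.
Qed.

Lemma dlog_odds_alpha_pos_near (q : R) (n : nat) (l : R) : q < 1 / 2 -> 0 < l < q ->
  exists a, l < a < q /\ 0 < dlog_odds_alpha q n a.
Proof.
  intros Hq Hl. pose proof (pos_INR n).
  set (delta := (q - l) * ((1 - 2 * q) * l / (INR n + 1))).
  assert (Hc : 0 < (1 - 2 * q) * l / (INR n + 1) < 1).
  { split; [apply Rdiv_lt_0_compat; nra|]. apply Rlt_div_l; nra. }
  assert (Hdelta : 0 < delta < q - l) by (unfold delta; split; nra).
  exists (q - delta). split; [lra|]. unfold dlog_odds_alpha.
  replace (q - (q - delta)) with delta by ring.
  assert (Hpole : (INR n + 1) / (l * (q - l))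
                  < (1 - 2 * q) / (delta * (1 - (q - delta) - q))).
  { replace ((INR n + 1) / (l * (q - l))) with ((1 - 2 * q) / delta)
      by (unfold delta; field; repeat split; apply Rgt_not_eq; lra).
    apply div_lt_div_cross; [lra | apply Rmult_lt_0_compat; lra |].
    apply Rmult_lt_compat_l; [lra|]. nra. }
  assert (Hgap : INR n / l < (INR n + 1) / (l * (q - l))).
  { apply div_lt_div_cross; [lra | nra |].
    assert (INR n * (l * (q - l)) <= INR n * l) by (apply Rmult_le_compat_l; nra).
    lra. }
  assert (Hleft : INR n / (q - delta) <= INR n / l).
  { apply Rmult_le_compat_l; [lra | apply Rinv_le_contravar; lra]. }
  assert (Hright : 0 < (INR n + 1) / (1 - (q - delta))) by (apply Rdiv_lt_0_compat; lra).
  lra.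
Qed.

Definition alpha_hat (q : R) (n : nat) : R := crossing (alpha q q) q (dlog_odds_alpha q n).

Definition p_hat (q : R) (n : nat) : R := alpha_hat q n * (1 - alpha_hat q n) / q.

Lemma alpha_diag_bounds (q : R) : 0 < q < 1 / 2 ->
  0 < alpha q q < q /\ alpha q q * (1 - alpha q q) = q * q.
Proof. intros Hq. apply alpha_bounds. repeat split; lra. Qed.

Lemma alpha_hat_spec (q : R) (n : nat) : 0 < q < 1 / 2 ->
  alpha q q <= alpha_hat q n < q /\
  (forall a, alpha q q < a < alpha_hat q n -> dlog_odds_alpha q n a < 0) /\
  (forall a, alpha_hat q n < a < q -> 0 < dlog_odds_alpha q n a).
Proof.
  intros Hq. destruct (alpha_diag_bounds q Hq) as (Ha0 & _).
  apply crossing_spec.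
  - intros x y Hx Hxy Hy. apply dlog_odds_alpha_incr; lra.
  - apply dlog_odds_alpha_pos_near; lra.
Qed.

Lemma p_hat_bounds (q : R) (n : nat) : 0 < q < 1 / 2 -> q <= p_hat q n < 1 - q.
Proof.
  intros Hq. destruct (alpha_diag_bounds q Hq) as (Ha0 & Hroot0).
  destruct (alpha_hat_spec q n Hq) as (Ha & _). unfold p_hat.
  set (a := alpha_hat q n) in *. set (a0 := alpha q q) in *.
  assert (0 <= (a - a0) * (1 - a - a0)) by (apply Rmult_le_pos; lra).
  assert (0 < (q - a) * (1 - q - a)) by (apply Rmult_lt_0_compat; lra).
  split; [apply Rle_div_r | apply Rlt_div_l]; nra.
Qed.

Lemma alpha_at_p_hat (q : R) (n : nat) : 0 < q < 1 / 2 -> alpha (p_hat q n) q = alpha_hat q n.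
Proof.
  intros Hq. destruct (alpha_diag_bounds q Hq) as (Ha0 & _).
  destruct (alpha_hat_spec q n Hq) as (Ha & _).
  apply alpha_of_root; lra.
Qed.

Lemma p_hat_discr_bound (q : R) (n : nat) : 0 < q < 1 / 2 -> 4 * p_hat q n * q <= 1.
Proof.
  intros Hq. pose proof (pow2_ge_0 (1 - 2 * alpha_hat q n)).
  unfold p_hat. replace (4 * (alpha_hat q n * (1 - alpha_hat q n) / q) * q)
    with (4 * (alpha_hat q n * (1 - alpha_hat q n))) by (field; apply Rgt_not_eq; lra).
  nra.
Qed.

Lemma odds_alpha_lt (p1 p2 q : R) (n : nat) : admissible p1 q -> admissible p2 q ->
  log_odds_alpha q n (alpha p1 q) < log_odds_alpha q n (alpha p2 q) ->
  odds p1 q n < odds p2 q n.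
Proof.
  intros H1 H2 Hlt. apply ln_lt_inv; [now apply odds_pos .. |].
  rewrite !ln_odds_alpha by assumption. lra.
Qed.

Lemma V_incr_below_p_hat (pi0 q p1 p2 : R) (e : evidence) :
  0 < pi0 < 1 -> 0 < q < 1 / 2 -> q < p1 -> p1 < p2 -> p2 < p_hat q (Z.to_nat (Ncap e)) ->
  V pi0 p1 q e < V pi0 p2 q e.
Proof.
  intros Hpi Hq Hp1 Hp12 Hp2. set (n := Z.to_nat (Ncap e)) in *.
  destruct (p_hat_bounds q n Hq). pose proof (p_hat_discr_bound q n Hq).
  destruct (alpha_diag_bounds q Hq) as (Ha0q & _).
  destruct (alpha_hat_spec q n Hq) as (Hhat & Hneg & _).
  assert (Hadm1 : admissible p1 q) by (repeat split; lra).
  assert (Hadm2 : admissible p2 q) by (repeat split; lra).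
  assert (H4 : 4 * p2 * q <= 1) by (pose proof (pow2_ge_0 (1 - 2 * q)); nra).
  assert (Ha0 : alpha q q < alpha p1 q) by (apply alpha_lt_alpha; nra).
  assert (Ha12 : alpha p1 q < alpha p2 q) by (apply alpha_lt_alpha; lra).
  assert (Ha2 : alpha p2 q < alpha_hat q n)
    by (rewrite <- (alpha_at_p_hat q n Hq); apply alpha_lt_alpha; lra).
  apply V_lt_of_odds; [assumption .. |]. apply odds_alpha_lt; [assumption .. |].
  apply (decr_of_deriv_neg _ (dlog_odds_alpha q n)); [lra | |]; intros a Ha;
    [apply is_derive_log_odds_alpha | apply Hneg]; lra.
Qed.

Lemma V_decr_above_p_hat (pi0 q p1 p2 : R) (e : evidence) :
  0 < pi0 < 1 -> 0 < q < 1 / 2 -> p_hat q (Z.to_nat (Ncap e)) < p1 -> p1 < p2 -> p2 < 1 - q ->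
  V pi0 p2 q e < V pi0 p1 q e.
Proof.
  intros Hpi Hq Hp1 Hp12 Hp2. set (n := Z.to_nat (Ncap e)) in *.
  destruct (p_hat_bounds q n Hq).
  destruct (alpha_diag_bounds q Hq) as (Ha0q & _).
  destruct (alpha_hat_spec q n Hq) as (Hhat & _ & Hpos).
  assert (Hadm1 : admissible p1 q) by (repeat split; lra).
  assert (Hadm2 : admissible p2 q) by (repeat split; lra).
  assert (H4 : 4 * p2 * q <= 1) by (pose proof (pow2_ge_0 (1 - 2 * q)); nra).
  assert (Ha1 : alpha_hat q n < alpha p1 q)
    by (rewrite <- (alpha_at_p_hat q n Hq); apply alpha_lt_alpha; nra).
  assert (Ha12 : alpha p1 q < alpha p2 q) by (apply alpha_lt_alpha; lra).
  destruct (alpha_bounds p2 q Hadm2) as (Ha2 & _).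
  apply V_lt_of_odds; [assumption .. |]. apply odds_alpha_lt; [assumption .. |].
  apply (incr_of_deriv_pos _ (dlog_odds_alpha q n)); [lra | |]; intros a Ha;
    [apply is_derive_log_odds_alpha | apply Hpos]; lra.
Qed.

Lemma p_hat_le (q : R) (n n' : nat) :
  0 < q < 1 / 2 -> (n <= n')%nat -> p_hat q n <= p_hat q n'.
Proof.
  intros Hq Hn. destruct (alpha_diag_bounds q Hq) as (Ha0 & _).
  assert (Hle : alpha_hat q n <= alpha_hat q n').
  { apply crossing_le. intros a Ha. apply dlog_odds_alpha_antitone; [exact Hn | lra]. }
  destruct (alpha_hat_spec q n Hq) as (Ha & _). destruct (alpha_hat_spec q n' Hq) as (Ha' & _).
  unfold p_hat. apply Rmult_le_compat_r; [left; apply Rinv_0_lt_compat; lra|].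
  assert (0 <= (alpha_hat q n' - alpha_hat q n) * (1 - alpha_hat q n' - alpha_hat q n))
    by (apply Rmult_le_pos; lra).
  nra.
Qed.

Lemma gamma_hat_cvg_1 (eps : R) : 0 < eps -> exists M : Z,
  forall N : Z, (0 < N)%Z -> (M <= N)%Z -> Rabs (gamma_hat N - 1) < eps.
Proof.
  intros Heps. exists (up (4 / eps)). intros N HN HM.
  destruct (archimed (4 / eps)) as [Hup _].
  apply IZR_le in HM. apply IZR_lt in HN. unfold gamma_hat.
  replace (1 + 4 / IZR N - 1) with (4 / IZR N) by ring.
  rewrite Rabs_right by (left; apply Rdiv_lt_0_compat; lra).
  assert (H : 4 / eps < IZR N) by lra.
  apply Rlt_div_l in H; [|lra].
  apply Rlt_div_l; lra.
Qed.

Theorem proposition7 :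
  forall pi0 : R, 0 < pi0 < 1 ->
  (* (1) decreasing in kappa, gamma fixed *)
  (forall (e : evidence) (gamma : R), 1 < gamma ->
     forall k1 k2 : R, 1 < k1 -> k1 < k2 ->
       Vgk pi0 gamma k2 e < Vgk pi0 gamma k1 e)
  /\
  (* (2a) N(e) = 0: decreasing in gamma, kappa fixed *)
  (forall (e : evidence) (kappa : R), 1 < kappa -> Ncap e = 0%Z ->
     forall g1 g2 : R, 1 < g1 -> g1 < g2 ->
       Vgk pi0 g2 kappa e < Vgk pi0 g1 kappa e)
  /\
  (* (2b) N(e) > 0: threshold ghat(e) > 1, increasing in gamma beyond it
     for every kappa > 1, and ghat -> 1 as N(e) -> infinity *)
  (exists ghat : evidence -> R,
     (forall e : evidence, (0 < Ncap e)%Z -> 1 < ghat e) /\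
     (forall e : evidence, (0 < Ncap e)%Z ->
        forall kappa : R, 1 < kappa ->
        forall g1 g2 : R, ghat e < g1 -> g1 < g2 ->
          Vgk pi0 g1 kappa e < Vgk pi0 g2 kappa e) /\
     (forall eps : R, 0 < eps -> exists M : Z,
        forall e : evidence, (0 < Ncap e)%Z -> (M <= Ncap e)%Z ->
          Rabs (ghat e - 1) < eps))
  /\
  (* (3) single-peakedness in p for fixed q in (0,1/2) *)
  (forall q : R, 0 < q < 1 / 2 ->
     exists phat : evidence -> R,
       (forall e : evidence, q <= phat e < 1 - q) /\
       (forall e : evidence, forall p1 p2 : R,
          q < p1 -> p1 < p2 -> p2 < phat e ->
          V pi0 p1 q e < V pi0 p2 q e) /\
       (forall e : evidence, forall p1 p2 : R,
          phat e < p1 -> p1 < p2 -> p2 < 1 - q ->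
          V pi0 p2 q e < V pi0 p1 q e) /\
       (forall e e' : evidence, (Ncap e <= Ncap e')%Z -> phat e <= phat e')).
Proof.
  intros pi0 Hpi. split; [|split; [|split]].
  - intros e gamma Hg k1 k2 Hk1 Hk12. now apply Vgk_decr_kappa.
  - intros e kappa Hk HN g1 g2 Hg1 Hg12. now apply Vgk_decr_gamma.
  - exists (fun e => gamma_hat (Ncap e)). split; [|split].
    + intros e. apply gamma_hat_gt_1.
    + intros e HN kappa Hk g1 g2 Hg1 Hg12. now apply Vgk_incr_gamma.
    + intros eps Heps. destruct (gamma_hat_cvg_1 eps Heps) as [M HM].
      exists M. intros e. apply HM.
  - intros q Hq. exists (fun e => p_hat q (Z.to_nat (Ncap e))). split; [|split; [|split]].
    + intros e. now apply p_hat_bounds.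
    + intros e p1 p2. now apply V_incr_below_p_hat.
    + intros e p1 p2. now apply V_decr_above_p_hat.
    + intros e e' He. apply p_hat_le; [exact Hq | lia].
Qed.
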